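(* Let $S$ be a left cancellative semigroup and let $U$ be the set of regular elements of $S$. Then: (i) for all $x,y\in S$, if $xy\in U$ then $x\in U$ and $y\in U$; in particular $S\setminus U$ is either empty or an ideal of $S$; (ii) if $U$ is non-empty, then $U$ is a subsemigroup of $S$ which is a right group; (iii) if $x\in S$ and the $\mathcal{R}$-class $R_x$ of $x$ in $S$ has more than one element, then $R_x=xU$; (iv) if $U$ is non-empty, then for every $x\in S$ the set $xU$ is an $\mathcal{R}$-class of $S$ (not necessarily containing $x$).
   Context: $S$ is left cancellative if $ax=ay$ implies $x=y$ for all $a,x,y\in S$. An element $x$ is regular if $x=xzx$ for some $z\in S$. $\mathcal{R}$ is Green's relation: $x\,\mathcal{R}\,y$ iff $xS^1=yS^1$. A right zero semigroup is a semigroup $E$ with $ef=f$ for all $e,f\in E$; a right group is a semigroup isomorphic to a direct product $G\times E$ of a group $G$ and a right zero semigroup $E$. *)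

Section SemigroupDefs.
Context {T : Type} (mul : T -> T -> T).

Definition associative_op : Prop :=
  forall x y z, mul x (mul y z) = mul (mul x y) z.

Definition left_cancellative : Prop :=
  forall a x y, mul a x = mul a y -> x = y.

Definition regular (x : T) : Prop := exists z, x = mul (mul x z) x.

Definition in_xS1 (x w : T) : Prop := w = x \/ exists s, w = mul x s.

Definition greenR (x y : T) : Prop := forall w, in_xS1 x w <-> in_xS1 y w.

Definition ideal (I : T -> Prop) : Prop :=
  (exists z, I z) /\ forall x s, I x -> I (mul s x) /\ I (mul x s).

Definition subsemigroup (A : T -> Prop) : Prop :=
  (exists z, A z) /\ forall x y, A x -> A y -> A (mul x y).

End SemigroupDefs.

Definition is_group (G : Type) (op : G -> G -> G) : Prop :=
  exists (e : G) (inv : G -> G),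
    (forall a b c, op a (op b c) = op (op a b) c) /\
    (forall a, op e a = a /\ op a e = a) /\
    (forall a, op (inv a) a = e /\ op a (inv a) = e).

(* A (as a subsemigroup of (T, mul)) is a right group: isomorphic to G × E
   with G a group and E a right zero semigroup (e f = f), the product being
   componentwise: (g, e)(h, f) = (g h, e f) = (g h, f). *)
Definition right_group {T : Type} (mul : T -> T -> T) (A : T -> Prop) : Prop :=
  exists (G : Type) (opG : G -> G -> G) (E : Type) (phi : G * E -> T),
    is_group G opG /\
    (forall p q, phi p = phi q -> p = q) /\
    (forall t, A t <-> exists p, phi p = t) /\
    (forall g e h f, phi (opG g h, f) = mul (phi (g, e)) (phi (h, f))).

(* In a left cancellative semigroup every idempotent e is a left identity,
   since e (e s) = e s.  Hence x is regular iff x a is idempotent for some a,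
   and regularity of x y forces that of x and y.  Fixing one idempotent e0,
   every regular t factors uniquely as t = g f with g in the group U e0 and
   f idempotent, and (g e)(h f) = g h f: this is the right group G x E.
   Finally the R-class of x e, for any idempotent e, is x U; and if x has an
   R-related y <> x, then x = x s t with s t idempotent. *)

From Stdlib Require Import ssreflect Classical ClassicalEpsilon ProofIrrelevance.

Section LeftCancellativeSemigroup.

Set Implicit Arguments.

Variables (T : Type) (mul : T -> T -> T).
Local Infix "·" := mul (at level 40, left associativity).

Hypothesis mulA : associative_op mul.
Hypothesis mul_cancel : left_cancellative mul.

Definition idempotent (e : T) : Prop := e · e = e.

Lemma idempotent_mull (e : T) : idempotent e -> forall s, e · s = s.
Proof. by move=> ee s; apply: (@mul_cancel e); rewrite mulA ee. Qed.

Lemma regularP (x : T) : regular mul x <-> exists a, idempotent (x · a).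
Proof.
split=> [[z xzx] | [a xa_idem]].
- by exists z; rewrite /idempotent mulA -xzx.
- by exists a; rewrite idempotent_mull.
Qed.

Lemma idempotent_regular (e : T) : idempotent e -> regular mul e.
Proof. by move=> ee; apply/regularP; exists e; rewrite ee. Qed.

Lemma regular_mul (x y : T) :
  regular mul x -> regular mul y -> regular mul (x · y).
Proof.
move=> /regularP[a xa_idem] /regularP[b yb_idem].
apply/regularP; exists (b · a).
by rewrite -mulA (mulA y) (idempotent_mull yb_idem).
Qed.

Lemma regular_mul_l (x y : T) : regular mul (x · y) -> regular mul x.
Proof. by move=> /regularP[a]; rewrite -mulA => xya_idem; apply/regularP; exists (y · a). Qed.

Lemma regular_mul_r (x y : T) : regular mul (x · y) -> regular mul y.
Proof.
move=> [z xyzxy]; exists (z · x); apply: (@mul_cancel x).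
by rewrite xyzxy !mulA.
Qed.

Lemma regular_mul_inv (x y : T) :
  regular mul (x · y) -> regular mul x /\ regular mul y.
Proof. by move=> xyU; split; [apply: regular_mul_l xyU | apply: regular_mul_r xyU]. Qed.

Lemma in_xS1_trans (x y w : T) :
  in_xS1 mul x y -> in_xS1 mul y w -> in_xS1 mul x w.
Proof.
move=> [-> | [s ->]] [-> | [t ->]]; rewrite /in_xS1; auto.
- by right; exists t.
- by right; exists s.
- by right; exists (s · t); rewrite mulA.
Qed.

Lemma greenR_in_xS1 (x y : T) :
  greenR mul x y <-> in_xS1 mul x y /\ in_xS1 mul y x.
Proof.
split=> [xRy | [xy yx] w].
- by split; [apply/xRy | apply/xRy]; left.
- by split=> ?; apply: in_xS1_trans; eauto.
Qed.

Lemma greenR_mul_idempotent (x e : T) : idempotent e ->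
  forall y, greenR mul (x · e) y <-> exists u, regular mul u /\ y = x · u.
Proof.
move=> ee y; have e_l := idempotent_mull ee; rewrite greenR_in_xS1.
split=> [[xe_y y_xe] | [u [/regularP[a ua_idem] ->]]].
- case: xe_y => [-> | [s ys]]; first by exists e; split; [apply: idempotent_regular|].
  case: y_xe => [xe_y | [t xe_yt]].
  + by exists e; split; [apply: idempotent_regular|].
  + have st_e : s · t = e.
      by apply: (@mul_cancel x); rewrite -{1}(e_l (s · t)) !mulA -ys -xe_yt.
    exists s; split.
    * by apply: (regular_mul_l (y := t)); rewrite st_e; apply: idempotent_regular.
    * by rewrite ys -mulA e_l.
- split; right.
  + by exists u; rewrite -mulA e_l.
  + by exists (a · e); rewrite -mulA (mulA u) (idempotent_mull ua_idem).
Qed.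

Lemma greenR_nontrivial (x y : T) :
  greenR mul x y -> y <> x -> exists e, idempotent e /\ x = x · e.
Proof.
move=> /greenR_in_xS1[[-> // | [s ys]] [yx | [t xyt]]] y_x; first by case: y_x.
have st_unit : x · (s · t) = x by rewrite mulA -ys -xyt.
exists (s · t); split; last by rewrite st_unit.
by apply: (@mul_cancel x); rewrite /idempotent mulA !st_unit.
Qed.

Section GroupOfIdempotent.

Variable e0 : T.
Hypothesis e0_idem : idempotent e0.

Definition in_group (g : T) : Prop := regular mul g /\ g · e0 = g.

Lemma in_group_e0 : in_group e0.
Proof. by split; [apply: idempotent_regular|]. Qed.

Lemma in_group_mul (g h : T) : in_group g -> in_group h -> in_group (g · h).
Proof. by move=> [gU _] [hU he0]; split; [apply: regular_mul | rewrite -mulA he0]. Qed.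

Lemma in_group_inverse (g : T) :
  in_group g -> exists a, in_group a /\ a · g = e0 /\ g · a = e0.
Proof.
move=> [[z gzg] ge0].
have gz_idem : idempotent (g · z) by rewrite /idempotent mulA -gzg.
have ga : g · (z · e0) = e0 by rewrite mulA (idempotent_mull gz_idem).
have ag : (z · e0) · g = e0.
  by apply: (@mul_cancel g); rewrite mulA ga (idempotent_mull e0_idem).
exists (z · e0); split; [split | by split].
- by exists g; rewrite ag (idempotent_mull e0_idem).
- by rewrite -mulA e0_idem.
Qed.

Lemma in_group_factor_unique (g f g' f' : T) :
  in_group g -> idempotent f -> in_group g' -> idempotent f' ->
  g · f = g' · f' -> g = g' /\ f = f'.
Proof.
move=> [_ ge0] f_idem [_ g'e0] f'_idem gf.
have g_g' : g = g'.
  by rewrite -ge0 -(idempotent_mull f_idem e0) mulA gf -mulA (idempotent_mull f'_idem) g'e0.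
by split; last (apply: (@mul_cancel g); rewrite gf g_g').
Qed.

Lemma regular_factor (t : T) : regular mul t ->
  exists g f, in_group g /\ idempotent f /\ t = g · f.
Proof.
move=> tU; have [z tzt] := tU.
exists (t · e0), (z · t); split; last split.
- split; [exact: regular_mul tU (idempotent_regular e0_idem) | by rewrite -mulA e0_idem].
- by rewrite /idempotent -mulA (mulA t z t) -tzt.
- by rewrite -mulA (mulA e0) (idempotent_mull e0_idem) mulA -tzt.
Qed.

End GroupOfIdempotent.

Lemma regular_right_group :
  (exists u, regular mul u) -> right_group mul (regular mul).
Proof.
move=> [u /regularP[z e0_idem]]; set e0 := u · z in e0_idem.
pose G := {g : T | in_group e0 g}.
pose E := {f : T | idempotent f}.
pose opG (g h : G) : G :=
  exist _ (proj1_sig g · proj1_sig h) (in_group_mul (proj2_sig g) (proj2_sig h)).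
pose inv (g : G) : G :=
  let (a, Ha) := constructive_indefinite_description _
                   (in_group_inverse e0_idem (proj2_sig g)) in
  exist _ a (proj1 Ha).
have inv_spec (g : G) : proj1_sig (inv g) · proj1_sig g = e0 /\
                        proj1_sig g · proj1_sig (inv g) = e0.
  by rewrite /inv; case: constructive_indefinite_description => ? [].
have val_inj (P : T -> Prop) (p q : sig P) : proj1_sig p = proj1_sig q -> p = q.
  exact: eq_sig_hprop (fun _ _ _ => proof_irrelevance _ _ _) p q.
exists G, opG, E, (fun p => proj1_sig (fst p) · proj1_sig (snd p)).
split; [|split; [|split]].
- exists (exist _ e0 (in_group_e0 e0_idem)), inv.
  split; [|split] => a.
  + by move=> b c; apply: val_inj; apply: mulA.
  + split; apply: val_inj => /=; first exact: idempotent_mull.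
    exact: (proj2 (proj2_sig a)).
  + by have [? ?] := inv_spec a; split; apply: val_inj.
- move=> [[g gG] [f f_idem]] [[g' g'G] [f' f'_idem]] /= gf.
  have [g_g' f_f'] := in_group_factor_unique gG f_idem g'G f'_idem gf.
  by subst g' f'; do 2 f_equal; apply: proof_irrelevance.
- move=> t; split=> [tU | [[[g [gU ge0]] [f f_idem]] <-]].
  + have [g [f [gG [f_idem t_gf]]]] := regular_factor e0_idem tU.
    by exists (exist _ g gG, exist _ f f_idem); rewrite t_gf.
  + by apply: regular_mul gU (idempotent_regular f_idem).
- move=> [g ?] [e e_idem] [h ?] [f ?] /=.
  by rewrite -!mulA (mulA e) (idempotent_mull e_idem).
Qed.

End LeftCancellativeSemigroup.

Theorem mainTheorem7 (T : Type) (mul : T -> T -> T)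
    (Hassoc : associative_op mul) (Hlc : left_cancellative mul) :
  let U := regular mul in
  (* (i) *)
  ((forall x y, U (mul x y) -> U x /\ U y) /\
   ((forall z, U z) \/ ideal mul (fun z => ~ U z))) /\
  (* (ii) *)
  ((exists u, U u) -> subsemigroup mul U /\ right_group mul U) /\
  (* (iii) *)
  (forall x, (exists y, greenR mul x y /\ y <> x) ->
     forall y, greenR mul x y <-> exists u, U u /\ y = mul x u) /\
  (* (iv) *)
  ((exists u, U u) ->
     forall x, exists z, forall y, greenR mul z y <-> exists u, U u /\ y = mul x u).
Proof.
move=> U; rewrite {}/U.
split; [split | split; [| split]].
- exact: regular_mul_inv Hassoc Hlc.
- case: (classic (forall z, regular mul z)) => [allU | /not_all_ex_not nonU]; [left | right] => //.
  by split=> // x s xnU; split=> /(regular_mul_inv Hassoc Hlc)[]; tauto.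
- move=> Une; split; first by split=> // x y; exact: (regular_mul Hassoc Hlc).
  exact: regular_right_group Hassoc Hlc Une.
- move=> x [y [xRy y_x]].
  have [e [e_idem x_xe]] := greenR_nontrivial Hassoc Hlc xRy y_x.
  by rewrite {1}x_xe; apply: greenR_mul_idempotent Hassoc Hlc _ _ e_idem.
- move=> [u /(regularP Hassoc Hlc)[a ua_idem]] x.
  by exists (mul x (mul u a)); apply: greenR_mul_idempotent Hassoc Hlc _ _ ua_idem.
Qed.
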